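(* Let $\mathbb{S}^1$ be a circle of perimeter $1$, let $P\subset\mathbb{S}^1$ be a finite point set containing a source $s$ with $|P|>2$, and let $\rho_{\mathrm{opt}}$ be an optimal range assignment for $P$ (for a fixed $\alpha>1$). Then $\rho_{\mathrm{opt}}(p)<\frac12$ for all $p\in P$.
   Context: Distance on $\mathbb{S}^1$ is arc length along the circle: $d(p,q)=\min(d_{\mathrm{cw}}(p,q),d_{\mathrm{ccw}}(p,q))$. A range assignment $\rho$ on $P$ induces a directed graph with edge $(p,q)$ iff $d(p,q)\le\rho(p)$; it is feasible if the graph contains an arborescence rooted at $s$ spanning $P$; its cost is $\sum_{p\in P}\rho(p)^\alpha$ with $\alpha>1$; an optimal assignment is a feasible one of minimum cost. *)

From mathcomp Require Import all_boot all_order all_algebra.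
From mathcomp Require Import all_classical all_reals all_analysis.
Set Implicit Arguments. Unset Strict Implicit. Unset Printing Implicit Defensive.
Import Order.TTheory GRing.Theory Num.Theory.
Local Open Scope ring_scope.

Section Circle.
Variable R : realType.

(* Points of the circle S^1 of perimeter 1 are coordinates in [0,1). *)
Definition on_circle (x : R) : Prop := 0 <= x /\ x < 1.

(* Arc-length distance: min of clockwise and counter-clockwise arcs. *)
Definition cdist (p q : R) : R := Num.min `|p - q| (1 - `|p - q|).

Definition edge (rho : R -> R) (p q : R) : Prop := cdist p q <= rho p.

(* An arborescence rooted at s spanning P in the graph induced by rho:
   a parent map par such that every non-root point of P has its parent in P,
   joined by an edge (par p, p), and following parents from any point of P
   reaches s (so there are no cycles). *)
Definition arborescence (P : seq R) (s : R) (rho : R -> R) (par : R -> R) : Prop :=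
  (forall p, p \in P -> p != s -> par p \in P /\ edge rho (par p) p) /\
  (forall p, p \in P -> exists n : nat, iter n par p = s).

Definition range_assignment (P : seq R) (rho : R -> R) : Prop :=
  forall p, p \in P -> 0 <= rho p.

Definition feasible (P : seq R) (s : R) (rho : R -> R) : Prop :=
  range_assignment P rho /\ exists par, arborescence P s rho par.

Definition cost (alpha : R) (P : seq R) (rho : R -> R) : R :=
  \sum_(p <- P) powR (rho p) alpha.

Definition optimal (alpha : R) (P : seq R) (s : R) (rho : R -> R) : Prop :=
  feasible P s rho /\
  forall rho', feasible P s rho' -> cost alpha P rho <= cost alpha P rho'.

End Circle.

From mathcomp Require Import all_boot all_order all_algebra.
From mathcomp Require Import all_classical all_reals all_analysis.
From mathcomp Require Import lra.
Set Implicit Arguments. Unset Strict Implicit. Unset Printing Implicit Defensive.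
Import Order.TTheory GRing.Theory Num.Theory.
Local Open Scope ring_scope.

(* Suppose [rho p >= 1/2].  If no point of [P] is antipodal to [p], lowering [rho p]
   to the distance of the farthest point of [P] keeps every edge out of [p] and costs
   less.  Otherwise let [q] be the antipode of [p] and [r] the point of [P] other than
   [p], [q] farthest from [p] (it exists as [|P| > 2]); then [a + b = 1/2] with
   [a = d(p,r)] and [b = d(r,q)].  Lower [rho p] to [a] and raise [rho r] to at least
   [b]: since [a^alpha + b^alpha < (a + b)^alpha] the cost drops.  The only edge that
   may be lost is [p -> q]; it is replaced by [r -> q], after re-hanging [r] below [p]
   when [r] was a descendant of [q] in the tree. *)

Section CircleDistance.
Variable R : realType.
Implicit Types p q r : R.

Local Lemma normP (x : R) : (0 <= x /\ `|x| = x) \/ (x < 0 /\ `|x| = - x).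
Proof. by case: (lerP 0 x) => h; [left; rewrite ger0_norm | right; rewrite ltr0_norm]. Qed.

Local Lemma minP (a b : R) : (a <= b /\ Num.min a b = a) \/ (b < a /\ Num.min a b = b).
Proof. by case: (lerP a b) => h; [left | right]. Qed.

Local Ltac circle_lra := rewrite /cdist /on_circle;
  repeat match goal with
  | |- context[`|?x|] => have [[? ->]|[? ->]] := normP x
  | |- context[Num.min ?a ?b] => have [[? ->]|[? ->]] := minP a b
  end; lra.

Lemma cdist_le_half p q : cdist p q <= 1 / 2.
Proof. circle_lra. Qed.

Lemma cdistxx p : cdist p p = 0.
Proof. circle_lra. Qed.

Lemma cdist_gt0 p q : on_circle p -> on_circle q -> p != q -> 0 < cdist p q.
Proof. move=> + + /lt_total/orP[]; circle_lra. Qed.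

Lemma cdist_antipodal_split p q r : on_circle p -> on_circle q -> on_circle r ->
  cdist p q = 1 / 2 -> cdist p r + cdist r q = 1 / 2.
Proof. circle_lra. Qed.

End CircleDistance.

Section Reachability.
Variables (T : eqType) (s : T).
Implicit Types (f g : T -> T) (x y : T).

Definition reaches f x := exists n, iter n f x = s.

Lemma reaches_parent g x y : g x = y -> reaches g y -> reaches g x.
Proof. by move=> gx [n hn]; exists n.+1; rewrite iterSr gx. Qed.

Lemma reaches_min f x : reaches f x ->
  exists d, iter d f x = s /\ forall m, iter m f x = s -> (d <= m)%N.
Proof.
case=> n hn; have ex : exists n, iter n f x == s by exists n; apply/eqP.
by case: (ex_minnP ex) => d /eqP hd dmin; exists d; split=> // m /eqP; apply: dmin.
Qed.

Lemma eq_iter_prefix f g n x :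
  (forall i, (i < n)%N -> g (iter i f x) = f (iter i f x)) -> iter n g x = iter n f x.
Proof.
elim: n => [//|n IH] eq_gf.
by rewrite !iterS IH ?eq_gf // => i /ltnW; apply: eq_gf.
Qed.

Lemma reaches_patch_shallow f g x d : iter d f x = s ->
  (forall y, g y != f y -> forall m, iter m f y = s -> (d < m)%N) -> reaches g x.
Proof.
move=> xd deep; exists d; rewrite (@eq_iter_prefix f g) // => i lt_id.
apply/eqP; apply: contraT => /deep/(_ (d - i)%N); rewrite -iterD subnK ?(ltnW lt_id) //.
by move/(_ xd); rewrite ltnNge leq_subr.
Qed.

Lemma reaches_patch f g x :
  (forall y, g y != f y -> reaches g y) -> reaches f x -> reaches g x.
Proof.
move=> patched [n]; elim: n x => [|n IH] x hx; first by exists 0%N.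
have [e|] := eqVneq (g x) (f x); last exact: patched.
by apply: reaches_parent e _; apply: IH; rewrite -iterSr.
Qed.

End Reachability.

Section Sums.
Variables (R : numDomainType) (T : eqType) (r : seq T) (F G : T -> R).
Hypothesis r_uniq : uniq r.

Lemma ltr_sum_at j : j \in r -> (forall x, x \in r -> x != j -> F x <= G x) ->
  F j < G j -> \sum_(x <- r) F x < \sum_(x <- r) G x.
Proof.
move=> jr le_FG lt_j; rewrite (bigD1_seq j) // [ltRHS](bigD1_seq j) //=.
by rewrite ltr_leD // big_seq_cond [leRHS]big_seq_cond ler_sum // => x /andP[]; apply: le_FG.
Qed.

Lemma ltr_sum_at2 j k : j \in r -> k \in r -> j != k ->
  (forall x, x \in r -> x != j -> x != k -> F x <= G x) ->
  F j + F k < G j + G k -> \sum_(x <- r) F x < \sum_(x <- r) G x.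
Proof.
move=> jr kr jk le_FG lt_jk; rewrite (bigD1_seq j) // [ltRHS](bigD1_seq j) //=.
rewrite -!(big_filter _ (fun x => x != j)).
have kr' : k \in [seq x <- r | x != j] by rewrite mem_filter eq_sym jk.
rewrite (bigD1_seq k) ?filter_uniq // [X in _ < _ + X](bigD1_seq k) ?filter_uniq //= !addrA.
rewrite ltr_leD // big_seq_cond [leRHS]big_seq_cond ler_sum // => x.
by rewrite mem_filter => /andP[/andP[xj xr] xk]; apply: le_FG.
Qed.

End Sums.

Lemma exists_argmax (R : realDomainType) (T : eqType) (f : T -> R) (r : seq T) x0 :
  x0 \in r -> exists2 x, x \in r & forall y, y \in r -> f y <= f x.
Proof.
rewrite -index_mem => x0r; pose F (i : 'I_(size r)) := f (nth x0 r i).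
case: (@arg_maxP _ _ _ (Ordinal x0r) xpredT F) => // i _ Fmax.
exists (nth x0 r i); first exact: mem_nth.
move=> y; rewrite -index_mem => yr.
by have := Fmax (Ordinal yr) isT; rewrite /F /= nth_index // -index_mem.
Qed.

Lemma exists_mem_neq2 (T : eqType) (r : seq T) (a b : T) : uniq r -> (2 < size r)%N ->
  exists2 x, x \in r & (x != a) && (x != b).
Proof.
move=> r_uniq r_big; apply/hasP; rewrite has_filter; apply: contraTneq r_big => ab_only.
rewrite -leqNgt (@uniq_leq_size _ _ [:: a; b]) // => x xr; apply: contraT.
by rewrite !inE negb_or => xab; rewrite -[false]/(x \in [::]) -ab_only mem_filter xab.
Qed.

Lemma powRD_gt (R : realType) (al a b : R) : 1 < al -> 0 < a -> 0 < b ->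
  a `^ al + b `^ al < (a + b) `^ al.
Proof.
move=> al1 a0 b0; have al0 : 0 < al by lra.
rewrite -(mulr_powRB1 (ltW a0)) // -(mulr_powRB1 (ltW b0)) //.
rewrite -(@mulr_powRB1 _ (a + b)) ?addr_ge0 ?ltW // mulrDl.
have lt_pow x : 0 < x < a + b -> x `^ (al - 1) < (a + b) `^ (al - 1).
  by move=> /andP[x0 xab]; apply: gt0_ltr_powR; rewrite ?nnegrE; lra.
by rewrite ltrD // ltr_pM2l //; apply: lt_pow; apply/andP; split=> //; lra.
Qed.

Section Arborescence.
Variables (R : realType) (P : seq R) (s : R).

Lemma arborescence_ranges (rho rho' par : R -> R) :
  (forall x, x \in P -> x != s -> edge rho' (par x) x) ->
  arborescence P s rho par -> arborescence P s rho' par.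
Proof.
move=> kept [tree reach]; split=> // x xP xs.
by have [parP _] := tree x xP xs; split=> //; apply: kept.
Qed.

Section Repair.
Variables (rho rho' par : R -> R) (p q r : R).
Hypotheses (tree : arborescence P s rho par)
  (pP : p \in P) (qP : q \in P) (rP : r \in P) (rq : r != q).
Hypothesis kept : forall x y, x \in P -> y \in P -> edge rho x y ->
  (x != p) || (y != q) -> edge rho' x y.
Hypotheses (edge_rq : edge rho' r q) (edge_pr : edge rho' p r).

Let parP x : x \in P -> x != s -> par x \in P.
Proof. by move=> xP xs; have [] := tree.1 x xP xs. Qed.

Let reach x : x \in P -> reaches s par x.
Proof. exact: tree.2. Qed.

Let kept_tree_edge x : x \in P -> x != s -> (par x != p) || (x != q) ->
  edge rho' (par x) x.
Proof. by move=> xP xs; apply: kept; rewrite ?parP //; have [] := tree.1 x xP xs. Qed.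

(* [arborescence] leaves [par s] free, so a parent chain may pass through [s] and
   come back: only minimal depths are meaningful. *)
Section MinDepth.
Variables (dq : nat) (dq_min : forall m, iter m par q = s -> (dq <= m)%N).

Lemma reroute_below_shallower dr : iter dr par r = s -> (dr < dq)%N ->
  arborescence P s rho' (fun x => if x == q then r else par x).
Proof.
move=> drs lt_rq; split=> [x xP xs|x xP].
  case: (eqVneq x q) => [->//|xq]; split; first exact: parP.
  by apply: kept_tree_edge; rewrite ?xq ?orbT.
apply: reaches_patch (reach xP) => y; case: (eqVneq y q) => [-> _|]; last by rewrite eqxx.
apply: (@reaches_parent _ _ _ _ r); first by rewrite eqxx.
apply: reaches_patch_shallow drs _ => z.
by case: (eqVneq z q) => [-> _ m /dq_min|]; [apply: leq_trans | rewrite eqxx].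
Qed.

Hypotheses (qs : q != s) (par_q : par q = p) (dqs : iter dq par q = s).

(* [p] is strictly shallower than [q], hence than [r] too, so it keeps its path. *)
Lemma reroute_through_r : (forall m, iter m par r = s -> (dq <= m)%N) ->
  arborescence P s rho'
    (fun x => if x == q then r else if x == r then p else par x).
Proof.
move=> r_deep; set g := fun x => _.
have [n dq_eq] : exists n, dq = n.+1.
  by case E: dq => [|n]; [move: qs; rewrite -dqs E eqxx | exists n].
have gp : reaches s g p.
  apply: (@reaches_patch_shallow _ _ par _ _ n); first by rewrite -par_q -iterSr -dq_eq.
  move=> y; rewrite /g; case: (eqVneq y q) => [-> _ m /dq_min|_]; first by rewrite dq_eq.
  by case: (eqVneq y r) => [-> _ m /r_deep|]; [rewrite dq_eq | rewrite eqxx].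
have gr : reaches s g r by apply: reaches_parent gp; rewrite /g (negbTE rq) eqxx.
have gq : reaches s g q by apply: reaches_parent gr; rewrite /g eqxx.
split=> [x xP xs|x xP].
  rewrite /g; case: (eqVneq x q) => [->//|xq]; case: (eqVneq x r) => [->//|_].
  by split; [apply: parP | apply: kept_tree_edge; rewrite ?xq ?orbT].
apply: reaches_patch (reach xP) => y; rewrite /g.
by case: (eqVneq y q) => [->//|_]; case: (eqVneq y r) => [->//|_]; rewrite eqxx.
Qed.

End MinDepth.

Lemma arborescence_repair : exists par', arborescence P s rho' par'.
Proof.
have [/andP[qs /eqP par_q]|kept_q] := boolP ((q != s) && (par q == p)); last first.
  exists par; apply: arborescence_ranges tree => x xP xs; apply: kept_tree_edge => //.
  have [exq|] := eqVneq x q; last by rewrite orbT.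
  by move: kept_q; rewrite -exq xs /= orbF.
have [dq [dqs dq_min]] := reaches_min (reach qP).
have [dr [drs dr_min]] := reaches_min (reach rP).
have [lt_rq|le_qr] := ltnP dr dq.
  by eexists; apply: (reroute_below_shallower dq_min drs lt_rq).
eexists; apply: (reroute_through_r dq_min qs par_q dqs) => m /dr_min.
exact: leq_trans.
Qed.

End Repair.
End Arborescence.

Section CheaperAssignment.
Variables (R : realType) (alpha : R) (P : seq R) (s : R) (rho par : R -> R) (p : R).
Hypotheses (alpha_gt1 : 1 < alpha) (P_uniq : uniq P)
  (P_circle : forall x, x \in P -> on_circle x)
  (rho_range : range_assignment P rho) (tree : arborescence P s rho par)
  (pP : p \in P) (rho_p : 1 / 2 <= rho p).

Let alpha_gt0 : 0 < alpha := lt_trans ltr01 alpha_gt1.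

Let powR_lt (x y : R) : 0 <= x -> x < y -> x `^ alpha < y `^ alpha.
Proof. by move=> x0 xy; apply: gt0_ltr_powR; rewrite ?nnegrE // (le_trans x0 (ltW xy)). Qed.

Lemma cheaper_without_antipode : (forall q, q \in P -> cdist p q != 1 / 2) ->
  exists2 rho', feasible P s rho' & cost alpha P rho' < cost alpha P rho.
Proof.
move=> no_antipode; have [r rP r_far] := exists_argmax (cdist p) pP.
have m_ge0 : 0 <= cdist p r by rewrite -(cdistxx p) r_far.
have m_lt : cdist p r < 1 / 2 by rewrite lt_neqAle cdist_le_half andbT no_antipode.
exists (fun x => if x == p then cdist p r else rho x).
  split=> [x xP|]; first by case: ifP => // _; apply: rho_range.
  exists par; apply: arborescence_ranges tree => x xP xs; rewrite /edge.
  have [parP par_edge] := tree.1 x xP xs.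
  by case: ifP => [/eqP ->|_ //]; apply: r_far.
apply: (ltr_sum_at P_uniq pP) => [x _ /negbTE -> //|].
by rewrite eqxx; apply: powR_lt => //; apply: lt_le_trans rho_p.
Qed.

Lemma cheaper_with_antipode q : (2 < size P)%N -> q \in P -> cdist p q = 1 / 2 ->
  exists2 rho', feasible P s rho' & cost alpha P rho' < cost alpha P rho.
Proof.
move=> P_big qP pq_half.
have pq : p != q by apply/eqP => epq; move: pq_half; rewrite -epq cdistxx; lra.
have [x0 x0P x0pq] := exists_mem_neq2 p q P_uniq P_big.
have x0P' : x0 \in [seq x <- P | (x != p) && (x != q)] by rewrite mem_filter x0pq.
have [r + r_far] := exists_argmax (cdist p) x0P'.
rewrite mem_filter => /andP[/andP[rp rq] rP].
set a := cdist p r; set b := cdist r q.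
have [[pC qC] rC] := (P_circle pP, P_circle qP, P_circle rP).
have ab : a + b = 1 / 2 by apply: cdist_antipodal_split.
have a_gt0 : 0 < a by apply: cdist_gt0; rewrite // eq_sym.
have b_gt0 : 0 < b by apply: cdist_gt0.
have far y : y \in P -> y != q -> cdist p y <= a.
  move=> yP yq; have [->|yp] := eqVneq y p; first by rewrite cdistxx ltW.
  by apply: r_far; rewrite mem_filter yp yq.
pose rho' x := if x == p then a else if x == r then Num.max (rho r) b else rho x.
have rho'_ge x : x != p -> rho x <= rho' x.
  by rewrite /rho' => /negbTE ->; case: ifP => [/eqP ->|//]; rewrite le_max lexx.
exists rho'.
  split=> [x xP|].
    have [->|xp] := eqVneq x p; first by rewrite /rho' eqxx ltW.
    exact: le_trans (rho_range xP) (rho'_ge x xp).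
  apply: (arborescence_repair tree pP qP rP rq) => [x y xP yP| |].
  - rewrite /edge; have [-> _ /= yq|xp xy _] := eqVneq x p.
      by rewrite /rho' eqxx; apply: far.
    exact: le_trans xy (rho'_ge x xp).
  - by rewrite /edge /rho' (negbTE rp) eqxx le_max lexx orbT.
  - by rewrite /edge /rho' eqxx.
apply: (ltr_sum_at2 P_uniq pP rP); first by rewrite eq_sym.
  by move=> x _ /negbTE xp /negbTE xr; rewrite /rho' xp xr.
rewrite /rho' eqxx (negbTE rp) eqxx.
have [b_le|b_gt] := lerP b (rho r).
  by rewrite ltr_leD //; apply: powR_lt; [exact: ltW | apply: lt_le_trans rho_p; lra].
apply: (lt_le_trans (powRD_gt alpha_gt1 a_gt0 b_gt0)).
rewrite ab -[leLHS]addr0 lerD ?powR_ge0 //.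
by apply: ge0_ler_powR; rewrite ?nnegrE ?rho_range ?(ltW alpha_gt0) //; lra.
Qed.

End CheaperAssignment.

Theorem lemma13 (R : realType) (alpha : R) (P : seq R) (s : R) (rho : R -> R) :
  1 < alpha ->
  uniq P -> (forall p, p \in P -> on_circle p) ->
  s \in P -> (2 < size P)%N ->
  optimal alpha P s rho ->
  forall p, p \in P -> rho p < 1 / 2.
Proof.
move=> alpha_gt1 P_uniq P_circle _ P_big [[rho_range [par tree]] rho_opt] p pP.
rewrite ltNge; apply/negP => rho_p.
suff [rho' feasible_rho' cheaper] :
    exists2 rho', feasible P s rho' & cost alpha P rho' < cost alpha P rho.
  by have := rho_opt _ feasible_rho'; rewrite leNgt cheaper.
have [[q qP pq_half]|no_antipode] := pselect (exists2 q, q \in P & cdist p q = 1 / 2).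
  exact: (cheaper_with_antipode alpha_gt1 P_uniq P_circle rho_range tree pP rho_p
            P_big qP pq_half).
apply: (cheaper_without_antipode alpha_gt1 P_uniq rho_range tree pP rho_p) => q qP.
by apply/eqP => pq_half; apply: no_antipode; exists q.
Qed.
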